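(* Consider $n$ flows sharing a server that performs interleaved weighted round robin (IWRR) with positive integer weights $w_1,\dots,w_n$, and fix a flow of interest $f_i$. Then for every backlogged period $(s,t]$ of $f_i$ and every $j\neq i$, \[ \frac{D_i(s,t)}{w_i l_i^{\min}} \;\geq\; \frac{\big[D_j(s,t)-w_j l_j^{\max}\big]^+}{w_j l_j^{\max}}, \] i.e. IWRR is a bandwidth-sharing policy for $f_i$ with the same weights $\phi_i'=w_i l_i^{\min}$, $\phi_j'=w_j l_j^{\max}$ ($j\ne i$) and penalty terms $H_{ij}'=w_j l_j^{\max}\mathbb{1}_{\{i\neq j\}}$ as for WRR.
   Context: Each flow $f_k$ sends packets with sizes in $[l_k^{\min},l_k^{\max}]$, $0<l_k^{\min}\le l_k^{\max}$, queued FIFO in a per-flow queue. IWRR: let $w_{\max}=\max_k w_k$. The server runs rounds forever; each round consists of cycles $c=1,\dots,w_{\max}$; in cycle $c$ the server visits flows $k=1,\dots,n$ in order and, if queue $k$ is nonempty and $c\le w_k$, transmits (non-preemptively) exactly one packet from the head of queue $k$. $D_k(t)$ is the cumulative data of flow $k$ that has left the server in $[0,t)$, $A_k(t)$ the cumulative arrivals, $D_k\le A_k$, $D_k(s,t):=D_k(t)-D_k(s)$. An interval $(s,t]$ is a backlogged period of $f_i$ if $D_i(\tau)<A_i(\tau)$ for all $\tau\in(s,t]$. $[x]^+:=\max\{x,0\}$. A server has a bandwidth-sharing policy if there exist weights $\phi_k>0$ and numbers $H_{ij}\ge0$ such that for every backlogged period $(s,t]$ of $f_i$ and all $j\neq i$: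 $D_i(s,t)/\phi_i\ge[D_j(s,t)-H_{ij}]^+/\phi_j$. *)

From HB Require Import structures.
From mathcomp Require Import all_boot all_order all_algebra.
From mathcomp Require Import boolp reals.
Set Implicit Arguments. Unset Strict Implicit. Unset Printing Implicit Defensive.
Import Order.TTheory GRing.Theory Num.Theory.
Local Open Scope ring_scope.

(* Service slots are numbered m = 0,1,2,...: slot m is the visit of flow
   (m %% n) in cycle ((m %/ n) %% wmax) (0-based, i.e. paper's cycle c is this
   index + 1) of round (m %/ (n * wmax)). *)
Record iwrr (R : realType) (n : nat) := IWRR {
  w    : 'I_n -> nat;
  lmin : 'I_n -> R;
  lmax : 'I_n -> R;
  np   : 'I_n -> nat;          (* number of packets of flow k *)
  arr  : 'I_n -> nat -> R;
  len  : 'I_n -> nat -> R;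
  vis  : nat -> R;             (* time at which slot m (the visit) happens *)
  fin  : nat -> R;             (* end of transmission started at slot m *)
  tx   : nat -> bool
}.

Section Defs.
Variables (R : realType) (n : nat) (T : iwrr R n).

Definition wmax : nat := \max_(k < n) w T k.

Definition eligible (k : 'I_n) (m : nat) : bool :=
  (m %% n == k)%N && ((m %/ n) %% wmax < w T k)%N.

Definition served_before (k : 'I_n) (m : nat) : nat :=
  count (fun m' => (m' %% n == k)%N && tx T m') (iota 0 m).

Definition arrived_upto (k : 'I_n) (x : R) : nat :=
  count (fun p => arr T k p <= x) (iota 0 (np T k)).

Definition valid : Prop :=
     (forall k, (0 < w T k)%N) /\
      (forall k, 0 < lmin T k /\ lmin T k <= lmax T k) /\
      (forall k p, (p < np T k)%N -> lmin T k <= len T k p <= lmax T k) /\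
      (forall k p, (p < np T k)%N -> 0 <= arr T k p) /\
      (* FIFO per-flow queue: packets are queued in arrival order *)
      (forall k p q, (p <= q)%N -> (q < np T k)%N -> arr T k p <= arr T k q) /\
      (* IWRR rule: at slot m (visit of flow k = m %% n in cycle c), one packet
         (the head of queue k) is sent iff c <= w_k and queue k is nonempty *)
      (forall m (k : 'I_n), (m %% n)%N = k ->
          tx T m = ((m %/ n) %% wmax < w T k)%N &&
                   (served_before k m < arrived_upto k (vis T m))%N) /\
      0 <= vis T 0 /\
      (forall m, vis T m <= fin T m) /\
      (* non-preemptive, sequential service: next visit after the current
         transmission (if any) has finished *)
      (forall m, (if tx T m then fin T m else vis T m) <= vis T m.+1).

Definition departed (k : 'I_n) (p : nat) (t : R) : Prop :=
  exists m, [/\ tx T m, (m %% n)%N = k, served_before k m = p & fin T m < t].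

Definition D (k : 'I_n) (t : R) : R :=
  \sum_(p < np T k | `[< departed k p t >]) len T k p.
Definition A (k : 'I_n) (t : R) : R :=
  \sum_(p < np T k | arr T k p < t) len T k p.

Definition Dint (k : 'I_n) (s t : R) : R := D k t - D k s.

Definition backlogged_period (k : 'I_n) (s t : R) : Prop :=
  s <= t /\ forall tau, s < tau -> tau <= t -> D k tau < A k tau.

End Defs.

Definition pos_part (R : realType) (x : R) : R := Num.max x 0.

(* Let m1 and m2 be the service slots of the first and last packets of flow j that leave
   during (s, t], lying in cycles C1 <= C2, and put L = C2 - C1, W = wmax.  Every block of
   W consecutive cycles contains exactly w_k cycles where flow k may send, so these
   departures come from at most w_j (L / W + 1) eligible slots of j.  Conversely, at least
   w_i (L / W) eligible slots of i lie strictly between m1 and m2, hence inside (s, t);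
   since i is backlogged, each of them transmits a packet that leaves before t.  Thus
   w_i (N_j - w_j) <= w_j N_i for the numbers of packets, and the packet size bounds
   l_min <= len <= l_max turn this count inequality into the bandwidth inequality. *)

From HB Require Import structures.
From mathcomp Require Import all_boot all_order all_algebra.
From mathcomp Require Import boolp reals.
From mathcomp Require Import zify lra.
Import Order.TTheory GRing.Theory Num.Theory.

Set Implicit Arguments.
Unset Strict Implicit.
Unset Printing Implicit Defensive.

Section ResidueCount.
Variables (W w : nat).
Hypothesis w_le_W : w <= W.

Lemma count_mod_lt_iota_period a : count (fun c => c %% W < w) (iota a W) = w.
Proof.
elim: a => [|a IH].
  rewrite (@eq_in_count _ _ (fun c => c < w)); last first.
    by move=> c; rewrite mem_iota add0n => /andP[_ /modn_small ->].
  rewrite -size_filter -{2}(size_iota 0 w); congr size.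
  rewrite -(subnKC w_le_W) iotaD filter_cat (eq_in_filter (a2 := predT)); last first.
    by move=> c; rewrite mem_iota add0n => /andP[_ ->].
  rewrite filter_predT (eq_in_filter (a2 := pred0)) ?filter_pred0 ?cats0 // => c.
  by rewrite mem_iota add0n => /andP[+ _]; rewrite leqNgt => /negbTE.
have E : iota a W.+1 = a :: iota a.+1 W by [].
have : count (fun c => c %% W < w) (iota a W.+1) =
       count (fun c => c %% W < w) (iota a W) + (a %% W < w).
  by rewrite -addn1 iotaD count_cat /= addn0 modnDr.
rewrite E /= IH; lia.
Qed.

Lemma count_mod_lt_iota_mul a q : count (fun c => c %% W < w) (iota a (q * W)) = q * w.
Proof.
elim: q a => [|q IH] a; first by rewrite !mul0n.
by rewrite !mulSn iotaD count_cat count_mod_lt_iota_period IH.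
Qed.

Lemma count_mod_lt_iota_ge a L : w * (L %/ W) <= count (fun c => c %% W < w) (iota a L).
Proof.
by rewrite {2}(divn_eq L W) iotaD count_cat count_mod_lt_iota_mul mulnC leq_addr.
Qed.

Hypothesis W_gt0 : 0 < W.

Lemma count_mod_lt_iota_le a L :
  count (fun c => c %% W < w) (iota a L.+1) <= w * (L %/ W).+1.
Proof.
have r_lt : (L %% W).+1 <= W by rewrite ltn_pmod.
rewrite {1}(divn_eq L W) -addnS iotaD count_cat count_mod_lt_iota_mul.
rewrite mulnS addnC [w * _]mulnC leq_add2r.
set b := a + _; rewrite -{2}(count_mod_lt_iota_period b).
by rewrite -[in iota b W](subnKC r_lt) iotaD count_cat leq_addr.
Qed.

End ResidueCount.

Lemma count_mod_lt_window_ratio W wi wj a b L : 0 < W -> wi <= W -> wj <= W ->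
  wi * (count (fun c => c %% W < wj) (iota a L.+1) - wj) <=
  wj * count (fun c => c %% W < wi) (iota b L).
Proof.
move=> W_gt0 wiW wjW.
have hj := count_mod_lt_iota_le wjW W_gt0 a L.
have hi := count_mod_lt_iota_ge wiW b L.
apply: (@leq_trans (wi * (wj * (L %/ W)))).
  by rewrite leq_mul2l leq_subLR -mulnS hj orbT.
by rewrite mulnCA leq_mul2l hi orbT.
Qed.

Lemma count_iota_downward_closed (P : pred nat) N :
  (forall p q, p <= q -> q < N -> P q -> P p) ->
  forall p, p < N -> (p < count P (iota 0 N)) = P p.
Proof.
elim: N => [|N IH] Pdown p // p_lt.
rewrite -[N.+1]addn1 iotaD count_cat /= addn0 add0n.
case PN: (P N).
  have -> : count P (iota 0 N) = N.
    apply/eqP; rewrite -[X in _ == X](size_iota 0 N) -all_count.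
    apply/allP => q; rewrite mem_iota add0n => /andP[_ q_lt].
    by apply: (Pdown q N) => //; apply: ltnW.
  by rewrite addn1 p_lt; symmetry; apply: (Pdown p N) => //; rewrite -ltnS.
rewrite addn0; have [p_ltN|->] : p < N \/ p = N by lia.
  by rewrite IH // => a b ab b_lt; apply: Pdown => //; apply: ltnW.
by rewrite PN ltnNge -[X in _ <= X](size_iota 0 N) count_size.
Qed.

Lemma has_iota_extrema (P : pred nat) N : has P (iota 0 N) ->
  exists p1 p2, [/\ P p1, P p2 & forall p, p < N -> P p -> p1 <= p <= p2].
Proof.
move=> /hasP[p0]; rewrite mem_iota add0n => /andP[_ p0_lt] Pp0.
have exP : exists p, (p < N) && P p by exists p0; rewrite p0_lt Pp0.
have ubP : forall p, (p < N) && P p -> p <= N by move=> p /andP[/ltnW].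
have [p1 /andP[_ Pp1] min1] := ex_minnP exP.
have [p2 /andP[_ Pp2] max2] := ex_maxnP exP ubP.
exists p1, p2; split => // p p_lt Pp.
by rewrite min1 ?max2 // p_lt.
Qed.

(* The slot of flow [i] in cycle [c] is [c * n + i]; it lies strictly between the slots
   [C1 * n + j] and [C2 * n + j] exactly for [C1 + (i < j) <= c < C2 + (i < j)]. *)
Lemma interleaved_slot_between (n i j m1 m2 c : nat) :
  i < n -> j < n -> i != j -> m1 %% n = j -> m2 %% n = j ->
  m1 %/ n + (i < j) <= c < m1 %/ n + (i < j) + (m2 %/ n - m1 %/ n) ->
  m1 < c * n + i < m2.
Proof.
move=> i_lt j_lt /negbTE ij m1j m2j.
have := divn_eq m1 n; have := divn_eq m2 n; rewrite m1j m2j.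
set C1 := m1 %/ n; set C2 := m2 %/ n => m2E m1E.
case: (ltngtP i j) ij => //= [ij|ji] _ /andP[lo hi].
- have cn : (C1 + 1) * n <= c * n by rewrite leq_mul2r lo orbT.
  have cn' : c * n <= C2 * n by rewrite leq_mul2r orbC -ltnS; lia.
  lia.
- have cn : C1 * n <= c * n by rewrite leq_mul2r orbC; lia.
  have cn' : (c + 1) * n <= C2 * n by rewrite leq_mul2r orbC; lia.
  lia.
Qed.

Local Open Scope ring_scope.

Lemma sum_count_bounds (R : numDomainType) (r : seq nat) (Q : pred nat) (f : nat -> R) lo hi :
  (forall x, x \in r -> lo <= f x <= hi) ->
  (count Q r)%:R * lo <= \sum_(x <- r | Q x) f x <= (count Q r)%:R * hi.
Proof.
elim: r => [|x r IH] f_bnd; first by rewrite big_nil /= !mul0r lexx.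
have /andP[IHlo IHhi] := IH (fun y yr => f_bnd y (@mem_behead _ (x :: r) y yr)).
have /andP[fxlo fxhi] := f_bnd x (mem_head _ _).
rewrite big_cons /=; case: (Q x) => /=; last by rewrite add0n IHlo IHhi.
by rewrite natrD !mulrDl !mul1r !lerD.
Qed.

Lemma sum_ord_count_bounds (R : numDomainType) N (Q : pred nat) (f : nat -> R) lo hi :
  (forall x, (x < N)%N -> lo <= f x <= hi) ->
  (count Q (iota 0 N))%:R * lo <= \sum_(x < N | Q x) f x <= (count Q (iota 0 N))%:R * hi.
Proof.
move=> f_bnd; rewrite -(big_mkord Q f) /index_iota subn0.
by apply: sum_count_bounds => x; rewrite mem_iota add0n => /andP[_ /f_bnd].
Qed.

Lemma pos_part_ratio_le (R : realType) (wi wj Ni Nj : nat) (li lj Si Sj : R) :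
  (0 < wi)%N -> (0 < wj)%N -> 0 < li -> 0 < lj ->
  Ni%:R * li <= Si -> Sj <= Nj%:R * lj -> (wi * (Nj - wj) <= wj * Ni)%N ->
  pos_part (Sj - wj%:R * lj) / (wj%:R * lj) <= Si / (wi%:R * li).
Proof.
move=> wi_gt0 wj_gt0 li_gt0 lj_gt0 Si_ge Sj_le ratio.
have wili_gt0 : 0 < wi%:R * li by rewrite mulr_gt0 ?ltr0n.
have wjlj_gt0 : 0 < wj%:R * lj by rewrite mulr_gt0 ?ltr0n.
have Si_ge0 : 0 <= Si by apply: le_trans Si_ge; rewrite mulr_ge0 // ltW.
rewrite /pos_part; case: (leP (Sj - wj%:R * lj) 0) => [_|excess].
  by rewrite mul0r divr_ge0 // ltW.
have wj_lt : (wj < Nj)%N.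
  by rewrite -(ltr_nat R) -(ltr_pM2r lj_gt0); apply: lt_le_trans Sj_le; rewrite -subr_gt0.
have ratioR : wi%:R * (Nj%:R - wj%:R) <= wj%:R * Ni%:R :> R.
  by rewrite -natrB ?(ltnW wj_lt) // -!natrM ler_nat.
rewrite ler_pdivlMr // mulrAC ler_pdivrMr //.
have f1 : (Sj - wj%:R * lj) * (wi%:R * li) <= ((Nj%:R - wj%:R) * lj) * (wi%:R * li).
  by apply: ler_wpM2r; [exact: ltW | rewrite mulrBl lerD2r].
have f2 : (wi%:R * (Nj%:R - wj%:R)) * (lj * li) <= (wj%:R * Ni%:R) * (lj * li).
  by rewrite ler_wpM2r // mulr_ge0 // ltW.
have f3 : (wj%:R * lj) * (Ni%:R * li) <= (wj%:R * lj) * Si by rewrite ler_wpM2l // ltW.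
lra.
Qed.

Section IwrrServer.
Variables (R : realType) (n : nat) (T : iwrr R n).
Hypothesis HT : valid T.

Lemma w_gt0 k : (0 < w T k)%N.
Proof. by case: HT. Qed.

Lemma lmin_gt0_le_lmax k : 0 < lmin T k /\ lmin T k <= lmax T k.
Proof. by case: HT => _ []. Qed.

Lemma len_bounds k p : (p < np T k)%N -> lmin T k <= len T k p <= lmax T k.
Proof. by case: HT => _ [_ [+ _]]; apply. Qed.

Lemma arr_fifo k p q : (p <= q)%N -> (q < np T k)%N -> arr T k p <= arr T k q.
Proof. by case: HT => _ [_ [_ [_ [+ _]]]]; apply. Qed.

Lemma tx_rule (k : 'I_n) m : (m %% n)%N = k -> tx T m =
  ((m %/ n) %% wmax T < w T k)%N && (served_before T k m < arrived_upto T k (vis T m))%N.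
Proof. by case: HT => _ [_ [_ [_ [_ [+ _]]]]]; apply. Qed.

Lemma vis_le_fin m : vis T m <= fin T m.
Proof. by case: HT => _ [_ [_ [_ [_ [_ [_ [+ _]]]]]]]; apply. Qed.

Lemma next_vis_ge m : (if tx T m then fin T m else vis T m) <= vis T m.+1.
Proof. by case: HT => _ [_ [_ [_ [_ [_ [_ [_ +]]]]]]]; apply. Qed.

Lemma w_le_wmax k : (w T k <= wmax T)%N.
Proof. exact: leq_bigmax. Qed.

Lemma vis_mono m m' : (m <= m')%N -> vis T m <= vis T m'.
Proof.
move=> mm'; rewrite -(subnKC mm'); elim: (m' - m)%N => [|d IH]; first by rewrite addn0.
rewrite addnS; apply: le_trans IH _; have := next_vis_ge (m + d).
by case: tx => //; apply: le_trans (vis_le_fin _).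
Qed.

Lemma fin_le_vis m m' : tx T m -> (m < m')%N -> fin T m <= vis T m'.
Proof.
by move=> txm mm'; have := next_vis_ge m; rewrite txm => /le_trans; apply; apply: vis_mono.
Qed.

Lemma served_beforeS (k : 'I_n) m : served_before T k m.+1 =
  (served_before T k m + ((m %% n == k) && tx T m))%N.
Proof. by rewrite /served_before -addn1 iotaD count_cat /= addn0. Qed.

Lemma served_before_mono (k : 'I_n) m m' :
  (m <= m')%N -> (served_before T k m <= served_before T k m')%N.
Proof.
move=> mm'; rewrite -(subnKC mm'); elim: (m' - m)%N => [|d IH]; first by rewrite addn0.
by rewrite addnS served_beforeS (leq_trans IH) ?leq_addr.
Qed.

Lemma served_before_lt (k : 'I_n) m m' : (m < m')%N -> tx T m -> (m %% n)%N = k ->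
  (served_before T k m < served_before T k m')%N.
Proof.
move=> mm' txm mk; apply: leq_trans (served_before_mono k mm').
by rewrite served_beforeS mk eqxx txm addn1.
Qed.

Lemma served_before_inj (k : 'I_n) m m' : tx T m -> (m %% n)%N = k ->
  tx T m' -> (m' %% n)%N = k -> served_before T k m = served_before T k m' -> m = m'.
Proof.
move=> txm mk txm' m'k e; case: (ltngtP m m') => // [mm'|m'm].
  by have := served_before_lt mm' txm mk; rewrite e ltnn.
by have := served_before_lt m'm txm' m'k; rewrite e ltnn.
Qed.

Lemma served_before_slot (k : 'I_n) m p : (p < served_before T k m)%N ->
  exists2 m', (m' < m)%N & [/\ tx T m', (m' %% n)%N = k & served_before T k m' = p].
Proof.
elim: m => [|m IH] //; rewrite served_beforeS.
case E: (_ && _) => /=; last by rewrite addn0 => /IH[m' /ltnW m'm]; exists m'.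
rewrite addn1 ltnS leq_eqVlt => /orP[/eqP ->|/IH[m' /ltnW m'm]]; last by exists m'.
by move/andP: E => [/eqP mk txm]; exists m.
Qed.

Lemma arrived_uptoE (k : 'I_n) x p : (p < np T k)%N ->
  (p < arrived_upto T k x)%N = (arr T k p <= x).
Proof.
apply: (count_iota_downward_closed (P := fun p => arr T k p <= x)) => a b ab b_lt /=.
exact/le_trans/arr_fifo.
Qed.

Lemma tx_eligible (k : 'I_n) m : tx T m -> (m %% n)%N = k -> eligible T k m.
Proof. by move=> + mk; rewrite (tx_rule mk) /eligible mk eqxx => /andP[]. Qed.

Lemma tx_packet (k : 'I_n) m : tx T m -> (m %% n)%N = k ->
  (served_before T k m < np T k)%N /\ arr T k (served_before T k m) <= vis T m.
Proof.
move=> + mk; rewrite (tx_rule mk) => /andP[_ served_lt].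
have sb_np : (served_before T k m < np T k)%N.
  apply: leq_trans served_lt _.
  by rewrite /arrived_upto -[X in (_ <= X)%N](size_iota 0 (np T k)) count_size.
by rewrite -arrived_uptoE.
Qed.

Lemma eligible_slot (k : 'I_n) c : eligible T k (c * n + k)%N = (c %% wmax T < w T k)%N.
Proof.
have k_lt := ltn_ord k; have n_gt0 : (0 < n)%N by apply: leq_ltn_trans k_lt.
by rewrite /eligible modnMDl modn_small // eqxx divnMDl // divn_small // addn0.
Qed.

Definition departs_in (k : 'I_n) (s t : R) (p : nat) : bool :=
  `[< departed T k p t >] && ~~ `[< departed T k p s >].

Definition departures (k : 'I_n) (s t : R) : nat :=
  count (departs_in k s t) (iota 0 (np T k)).

Lemma departs_inP (k : 'I_n) s t p :
  reflect (exists m, [/\ tx T m, (m %% n)%N = k, served_before T k m = p & s <= fin T m < t])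
          (departs_in k s t p).
Proof.
apply: (iffP andP) => [[/asboolP[m [txm mk sbm fin_t]] /asboolP not_s]|].
  exists m; split => //; rewrite fin_t andbT leNgt; apply/negP => fin_s.
  by apply: not_s; exists m.
move=> [m [txm mk sbm /andP[s_fin fin_t]]]; split; first by apply/asboolP; exists m.
apply/asboolP => -[m' [txm' m'k sbm' fin_s]].
have e := served_before_inj txm' m'k txm mk (etrans sbm' (esym sbm)); subst m'.
by have := lt_le_trans fin_s s_fin; rewrite ltxx.
Qed.

Lemma departed_mono (k : 'I_n) p s t : s <= t -> departed T k p s -> departed T k p t.
Proof. by move=> st [m [txm mk sbm fin_s]]; exists m; split => //; apply: lt_le_trans st. Qed.

Lemma Dint_departs_in (k : 'I_n) s t : s <= t ->
  Dint T k s t = \sum_(p < np T k | departs_in k s t p) len T k p.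
Proof.
move=> st; rewrite /Dint /D (bigID (fun p : 'I_(np T k) => `[< departed T k p s >])) /=.
rewrite (eq_bigl (fun p : 'I_(np T k) => `[< departed T k p s >])).
  by rewrite addrC addrK.
move=> p; apply/andP/idP => [[] //|dep_s]; split => //.
by apply/asboolP; apply: (departed_mono st); apply/asboolP.
Qed.

Lemma backlogged_eligible_tx (i : 'I_n) s t m : backlogged_period T i s t ->
  eligible T i m -> s <= vis T m -> vis T m < t -> tx T m.
Proof.
move=> [_ backlog] /andP[/eqP mi cyc] s_vis vis_t.
rewrite (tx_rule mi) cyc /= ltnNge; apply/negP => all_served.
set c := arrived_upto T i (vis T m) in all_served.
(* Up to [tau], the next arrival after [vis T m], every arrived packet of [i] is served
   before [m], so queue [i] is empty at [tau], against the backlog. *)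
pose tau := if (c < np T i)%N then Num.min t (arr T i c) else t.
have vis_tau : vis T m < tau.
  by rewrite /tau; case: ifP => // c_np; rewrite lt_min vis_t ltNge -arrived_uptoE // ltnn.
have tau_t : tau <= t by rewrite /tau; case: ifP => // _; rewrite ge_min lexx.
suff D_eq_A : D T i tau = A T i tau.
  by have := backlog tau (le_lt_trans s_vis vis_tau) tau_t; rewrite D_eq_A ltxx.
rewrite /D /A; apply: eq_bigl => p; apply/asboolP/idP => [[m' [txm' m'i sbm' fin_tau]]|arr_p].
  have [_] := tx_packet txm' m'i; rewrite sbm' => /le_lt_trans; apply.
  exact: le_lt_trans (vis_le_fin m') fin_tau.
have p_c : (p < c)%N.
  rewrite ltnNge; apply/negP => c_p.
  have c_np : (c < np T i)%N := leq_ltn_trans c_p (ltn_ord p).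
  have tau_arr : tau <= arr T i c by rewrite /tau c_np ge_min lexx orbT.
  have := lt_le_trans arr_p (le_trans tau_arr (arr_fifo c_p (ltn_ord p))).
  by rewrite ltxx.
have [m' m'm [txm' m'i sbm']] := served_before_slot (leq_trans p_c all_served).
by exists m'; split => //; apply: le_lt_trans (fin_le_vis txm' m'm) vis_tau.
Qed.

Lemma departures_le_cycles (k : 'I_n) s t m1 m2 :
  tx T m1 -> (m1 %% n)%N = k -> tx T m2 -> (m2 %% n)%N = k ->
  (forall p, (p < np T k)%N -> departs_in k s t p ->
     served_before T k m1 <= p <= served_before T k m2)%N ->
  (departures k s t <=
   count (fun c => c %% wmax T < w T k) (iota (m1 %/ n) (m2 %/ n - m1 %/ n).+1))%N.
Proof.
move=> txm1 m1k txm2 m2k bracket.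
rewrite /departures -!size_filter.
rewrite -[X in (_ <= X)%N](size_map (fun c => served_before T k (c * n + k)%N)).
apply: uniq_leq_size; first exact: filter_uniq (iota_uniq _ _).
move=> p; rewrite mem_filter mem_iota add0n => /andP[dep /andP[_ p_np]].
have /andP[lo hi] := bracket p p_np dep.
have /departs_inP[m [txm mk sbm _]] := dep.
have m1m : (m1 <= m)%N.
  by rewrite leqNgt; apply/negP => /served_before_lt/(_ txm mk); rewrite sbm ltnNge lo.
have mm2 : (m <= m2)%N.
  by rewrite leqNgt; apply/negP => /served_before_lt/(_ txm2 m2k); rewrite sbm ltnNge hi.
apply/mapP; exists (m %/ n)%N; last by rewrite -mk -divn_eq sbm.
have /andP[_ cyc] := tx_eligible txm mk.
have := leq_div2r n m1m; have := leq_div2r n mm2.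
by rewrite mem_filter cyc mem_iota /=; lia.
Qed.

Lemma eligible_between_departs_in (i : 'I_n) s t m1 m2 x : backlogged_period T i s t ->
  tx T m1 -> s <= fin T m1 -> tx T m2 -> fin T m2 < t -> (m1 < x < m2)%N ->
  eligible T i x -> [/\ tx T x, (x %% n)%N = i & departs_in i s t (served_before T i x)].
Proof.
move=> backlogged txm1 s_fin1 txm2 fin2_t /andP[m1x xm2] elig.
have s_vis : s <= vis T x := le_trans s_fin1 (fin_le_vis txm1 m1x).
have vis2_t : vis T m2 < t := le_lt_trans (vis_le_fin m2) fin2_t.
have vis_t : vis T x < t := le_lt_trans (vis_mono (ltnW xm2)) vis2_t.
have txx := backlogged_eligible_tx backlogged elig s_vis vis_t.
have /andP[/eqP xi _] := elig.
split => //; apply/departs_inP; exists x; split => //.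
by rewrite (le_trans s_vis (vis_le_fin x)) (le_lt_trans (fin_le_vis txx xm2) vis2_t).
Qed.

Lemma cycles_le_departures (i j : 'I_n) s t m1 m2 : j != i -> backlogged_period T i s t ->
  tx T m1 -> (m1 %% n)%N = j -> s <= fin T m1 -> tx T m2 -> (m2 %% n)%N = j -> fin T m2 < t ->
  (count (fun c => c %% wmax T < w T i) (iota (m1 %/ n + (i < j)) (m2 %/ n - m1 %/ n))
   <= departures i s t)%N.
Proof.
move=> ji backlogged txm1 m1j s_fin1 txm2 m2j fin2_t.
rewrite /departures -!size_filter; set cycles := filter _ (iota _ _).
have slot_departs c : c \in cycles ->
    [/\ tx T (c * n + i)%N, ((c * n + i) %% n)%N = i &
        departs_in i s t (served_before T i (c * n + i)%N)].
  rewrite mem_filter mem_iota => /andP[cyc range].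
  apply: eligible_between_departs_in txm1 s_fin1 txm2 fin2_t _ _ => //.
    by apply: interleaved_slot_between m1j m2j range; rewrite // eq_sym.
  by rewrite eligible_slot.
rewrite -(size_map (fun c => served_before T i (c * n + i)%N)).
apply: uniq_leq_size.
  rewrite map_inj_in_uniq ?filter_uniq ?iota_uniq // => c c' /slot_departs[txc ci _].
  move=> /slot_departs[txc' c'i _] /(served_before_inj txc ci txc' c'i) /addIn /eqP.
  by rewrite eqn_pmul2r ?(leq_ltn_trans _ (ltn_ord i)) // => /eqP.
move=> p /mapP[c /slot_departs[txc ci dep] ->].
by rewrite mem_filter dep mem_iota add0n (proj1 (tx_packet txc ci)).
Qed.

Lemma departures_ratio (i j : 'I_n) s t : j != i -> backlogged_period T i s t ->
  (w T i * (departures j s t - w T j) <= w T j * departures i s t)%N.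
Proof.
move=> ji backlogged.
have [->|some_dep] := posnP (departures j s t); first by rewrite sub0n muln0.
have := @has_iota_extrema (departs_in j s t) (np T j).
rewrite has_count => /(_ some_dep) [p1 [p2 [dep1 dep2 bracket]]].
have /departs_inP[m1 [txm1 m1j sbm1 /andP[s_fin1 _]]] := dep1.
have /departs_inP[m2 [txm2 m2j sbm2 /andP[_ fin2_t]]] := dep2.
rewrite -sbm1 -sbm2 in bracket.
have j_cycles := departures_le_cycles txm1 m1j txm2 m2j bracket.
have i_cycles := cycles_le_departures ji backlogged txm1 m1j s_fin1 txm2 m2j fin2_t.
apply: leq_trans (leq_mul (leqnn _) (leq_sub2r _ j_cycles)) _.
apply: leq_trans (leq_mul (leqnn _) i_cycles).
apply: count_mod_lt_window_ratio; rewrite ?w_le_wmax //.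
exact: leq_trans (w_gt0 i) (w_le_wmax i).
Qed.

End IwrrServer.

Theorem mainTheorem4 (R : realType) (n : nat) (T : iwrr R n) (HT : valid T)
  (i j : 'I_n) (hji : j != i) (s t : R) (hb : backlogged_period T i s t) :
  pos_part (Dint T j s t - (w T j)%:R * lmax T j) / ((w T j)%:R * lmax T j)
  <= Dint T i s t / ((w T i)%:R * lmin T i).
Proof.
have st : s <= t by case: hb.
rewrite !Dint_departs_in //.
have [lmin_i_gt0 _] := lmin_gt0_le_lmax HT i.
have [lmin_j_gt0 lmin_le_lmax_j] := lmin_gt0_le_lmax HT j.
have /andP[_ sum_j] := sum_ord_count_bounds (departs_in T j s t) (len_bounds HT (k := j)).
have /andP[sum_i _] := sum_ord_count_bounds (departs_in T i s t) (len_bounds HT (k := i)).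
apply: pos_part_ratio_le sum_i sum_j (departures_ratio HT hji hb); rewrite ?w_gt0 //.
exact: lt_le_trans lmin_le_lmax_j.
Qed.
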